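(* Consider a switched descriptor system $E_{\sigma(t)}\dot x=A_{\sigma(t)}x$, $\sigma(t)\in\{1,\dots,N\}$, with each $A_i$ nonsingular, and suppose that for each $i=1,\dots,N$ there is a Lyapunov matrix $P_i$ for $(E_i,A_i)$ such that for every solution $x(\cdot)$ and every time $t_*$ at which $\sigma$ switches from $i$ to $j$, $$x(t_*^+)^TP_jx(t_*^+)\le x(t_*^-)^TP_ix(t_*^-).$$ Then the switched system is globally uniformly exponentially stable (GUES).
   Context: For $E,A\in\mathbb{R}^{n\times n}$ with $A$ nonsingular, $(E,A)$ denotes the descriptor system $E\dot x=Ax$; its index is the smallest $k^*\ge0$ with $\mathrm{Im}((A^{-1}E)^{k^*+1})=\mathrm{Im}((A^{-1}E)^{k^*})$ and its consistency space is $\mathcal{C}(E,A)=\mathrm{Im}((A^{-1}E)^{k^*})$. When $\mathcal{C}\ne\{0\}$, $A^{-1}E$ is a bijection of $\mathcal{C}$ onto itself, and with $\tilde A$ the inverse of its restriction, the system on $\mathcal{C}$ is $\dot x=\tilde Ax$. A symmetric $P$ is a Lyapunov matrix for $(E,A)$ if $x^TPx>0$ for nonzero $x\in\mathcal{C}$ and $2x^TP\tilde Ax<0$ for nonzero $x\in\mathcal{C}$. Switched descriptor system: the switching signal $\sigma$ is piecewise constant with values in $\{1,\dots,N\}$ and finitely many discontinuities in every bounded interval. A solution is a function $x(\cdot)$ that is differentiable and satisfies $E_{\sigma(t)}\dot x(t)=A_{\sigma(t)}x(t)$ at every $t$ where $\sigma$ is continuous (so $x(t)\in\mathcal{C}(E_{\sigma(t)},A_{\sigma(t)})$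 there), and has one-sided limits $x(t_*^-)$, $x(t_*^+)$ at each discontinuity $t_*$ of $\sigma$; the differential equation is not required at discontinuities, and the relation between $x(t_*^+)$ and $x(t_*^-)$ as well as which switches are allowed are part of the system specification. The system is GUES if there exist $\beta,\alpha>0$ such that every solution satisfies $\|x(t)\|\le\beta e^{-\alpha(t-t_0)}\|x(t_0)\|$ for all $t\ge t_0$. *)

From Stdlib Require Import Reals Lra Lia.
Open Scope R_scope.

(** Vectors in R^n are [nat -> R], n x n matrices are [nat -> nat -> R];
    only indices < n are meaningful. *)
Definition vec := nat -> R.
Definition mat := nat -> nat -> R.

Fixpoint sumR (n : nat) (f : nat -> R) : R :=
  match n with O => 0 | S m => sumR m f + f m end.

Definition veq (n : nat) (x y : vec) : Prop := forall i, (i < n)%nat -> x i = y i.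
Definition vzero : vec := fun _ => 0.

Definition mv (n : nat) (M : mat) (x : vec) : vec :=
  fun i => sumR n (fun j => M i j * x j).
Definition mm (n : nat) (M K : mat) : mat :=
  fun i k => sumR n (fun j => M i j * K j k).
Definition idm : mat := fun i j => if Nat.eqb i j then 1 else 0.
Fixpoint mpow (n : nat) (M : mat) (k : nat) : mat :=
  match k with O => idm | S k' => mm n M (mpow n M k') end.

Definition is_inverse (n : nat) (A Ainv : mat) : Prop :=
  forall i j, (i < n)%nat -> (j < n)%nat ->
    mm n A Ainv i j = idm i j /\ mm n Ainv A i j = idm i j.

Definition inIm (n : nat) (M : mat) (y : vec) : Prop :=
  exists z, veq n (mv n M z) y.

Definition im_stable (n : nat) (M : mat) (k : nat) : Prop :=
  forall y, inIm n (mpow n M (S k)) y <-> inIm n (mpow n M k) y.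

Definition is_index (n : nat) (E Ainv : mat) (k : nat) : Prop :=
  im_stable n (mm n Ainv E) k /\
  forall j, (j < k)%nat -> ~ im_stable n (mm n Ainv E) j.

Definition inC (n : nat) (E Ainv : mat) (x : vec) : Prop :=
  exists k, is_index n E Ainv k /\ inIm n (mpow n (mm n Ainv E) k) x.

Definition bil (n : nat) (P : mat) (x y : vec) : R :=
  sumR n (fun i => x i * mv n P y i).
Definition quad (n : nat) (P : mat) (x : vec) : R := bil n P x x.

(** Lyapunov matrix for (E,A).  On C, A^{-1}E is a bijection and Atilde is the
    inverse of its restriction: Atilde x is the unique y in C with (A^{-1}E) y = x. *)
Definition lyapunov_matrix (n : nat) (E Ainv P : mat) : Prop :=
  (forall i j, (i < n)%nat -> (j < n)%nat -> P i j = P j i) /\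
  (forall x, inC n E Ainv x -> ~ veq n x vzero -> quad n P x > 0) /\
  (forall x y, inC n E Ainv x -> inC n E Ainv y ->
     veq n (mv n (mm n Ainv E) y) x -> ~ veq n x vzero ->
     2 * bil n P x y < 0).

Definition vnorm (n : nat) (x : vec) : R := sqrt (sumR n (fun i => x i ^ 2)).

Definition sig_cont (sg : R -> nat) (t : R) : Prop :=
  exists d, d > 0 /\ forall s, Rabs (s - t) < d -> sg s = sg t.

Definition piecewise_constant (ts : R) (sg : R -> nat) : Prop :=
  (forall b, ts < b -> exists (m : nat) (pts : nat -> R),
     pts O = ts /\ pts m = b /\
     (forall k, (k < m)%nat -> pts k < pts (S k)) /\
     (forall k s s', (k < m)%nat -> pts k < s < pts (S k) ->
        pts k < s' < pts (S k) -> sg s = sg s')) /\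
  (forall t, ts <= t -> exists d, d > 0 /\ forall s, t <= s < t + d -> sg s = sg t).

Definition left_lim (n : nat) (x : R -> vec) (t : R) (l : vec) : Prop :=
  forall eps, eps > 0 -> exists d, d > 0 /\
    forall s, t - d < s < t -> forall i, (i < n)%nat -> Rabs (x s i - l i) < eps.
Definition right_lim (n : nat) (x : R -> vec) (t : R) (l : vec) : Prop :=
  forall eps, eps > 0 -> exists d, d > 0 /\
    forall s, t < s < t + d -> forall i, (i < n)%nat -> Rabs (x s i - l i) < eps.

Definition has_deriv (n : nat) (x : R -> vec) (t : R) (dx : vec) : Prop :=
  forall i, (i < n)%nat -> derivable_pt_lim (fun s => x s i) t (dx i).

(** (ts, sg, x) is a solution of the switched descriptor system on [ts, +oo).
    Convention: at switching instants (and at ts) x is right-continuous. *)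
Definition is_solution (n N : nat) (E A : nat -> mat) (ts : R)
    (sg : R -> nat) (x : R -> vec) : Prop :=
  (forall t, ts <= t -> (1 <= sg t <= N)%nat) /\
  piecewise_constant ts sg /\
  right_lim n x ts (x ts) /\
  (forall t, ts < t -> sig_cont sg t ->
     exists dx, has_deriv n x t dx /\
       veq n (mv n (E (sg t)) dx) (mv n (A (sg t)) (x t))) /\
  (forall t, ts < t -> ~ sig_cont sg t ->
     (exists xm, left_lim n x t xm) /\ right_lim n x t (x t)).

(** sigma switches from i to j at t (sigma is right-continuous, so sg t = j) *)
Definition switch_at (sg : R -> nat) (t : R) (i j : nat) : Prop :=
  ~ sig_cont sg t /\
  (exists d, d > 0 /\ forall s, t - d < s < t -> sg s = i) /\
  sg t = j.

Definition GUES (n : nat) (S : R -> (R -> nat) -> (R -> vec) -> Prop) : Prop :=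
  exists beta alpha, beta > 0 /\ alpha > 0 /\
    forall ts sg x, S ts sg x -> forall t0 t, ts <= t0 -> t0 <= t ->
      vnorm n (x t) <= beta * exp (- alpha * (t - t0)) * vnorm n (x t0).

From Stdlib Require Import Reals Lra Lia Classical IndefiniteDescription.
From mathcomp Require all_boot all_order all_algebra.
From mathcomp Require boolp classical_sets reals topology normedtype derive Rstruct.
Open Scope R_scope.

(* On each mode the consistency space C is invariant under M = A^{-1} E, and
   M is injective on C.  Minimising quadratic forms over the compact unit
   sphere of C therefore gives one constant c > 0, valid for all modes, with
   c |x|^2 <= x^T P x <= c^{-1} |x|^2 on C and V' <= -c V for V = x^T P_sigma x
   along any solution.  So exp(c t) V(t) is nonincreasing on every interval
   where sigma is constant; it does not increase where sigma is continuous
   nor, by hypothesis, at a switch.  Hence it is nonincreasing on all of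
   [ts, oo), and the sandwich turns this into
   |x(t)| <= c^{-1} exp(-c (t - t0) / 2) |x(t0)|. *)

Definition sqnorm (n : nat) (x : vec) : R := sumR n (fun i => x i ^ 2).

Module LinearAlgebra.
Import all_boot all_order all_algebra.
Import boolp classical_sets reals topology normedtype derive Rstruct.
Import Order.TTheory GRing.Theory Num.Theory.
Import numFieldNormedType.Exports numFieldTopology.Exports.

Section QuadraticForm.
Local Open Scope classical_set_scope.
Local Open Scope ring_scope.
Variables (R : realType) (n : nat).
Implicit Types (Q B : 'M[R]_n) (v : 'rV[R]_n).

Definition qform Q v : R := (v *m Q *m v^T) 0 0.

Lemma qformE Q v : qform Q v = \sum_j (\sum_i v 0 i * Q i j) * v 0 j.
Proof. by rewrite /qform !mxE; apply: eq_bigr => j _; rewrite !mxE. Qed.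

Lemma continuous_big (I : Type) (r : seq I) (F : I -> 'rV[R]_n -> R) :
  (forall i, continuous (F i)) -> continuous (fun v => \sum_(i <- r) F i v).
Proof.
move=> HF; elim: r => [|a r IH].
  under [X in continuous X]funext do rewrite big_nil.
  exact: cst_continuous.
under [X in continuous X]funext do rewrite big_cons.
by move=> x; apply: continuousD; [exact: HF | exact: IH].
Qed.

Lemma qform_continuous Q : continuous (qform Q).
Proof.
under [X in continuous X]funext do rewrite qformE.
apply: continuous_big => j x; apply: continuousM; last exact: coord_continuous.
apply: continuous_big => i y; apply: continuousM; first exact: coord_continuous.
exact: cst_continuous.
Qed.

Lemma qform1E v : qform 1%:M v = \sum_j v 0 j ^+ 2.
Proof.
rewrite qformE; apply: eq_bigr => j _.
rewrite (bigD1 j) //= big1 ?addr0; first by rewrite mxE eqxx mulr1 expr2.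
by move=> i /negbTE ij; rewrite mxE ij mulr0.
Qed.

Lemma qform1_ge0 v : 0 <= qform 1%:M v.
Proof. by rewrite qform1E; apply: sumr_ge0 => j _; exact: sqr_ge0. Qed.

Lemma qform1_eq0 v : qform 1%:M v = 0 -> v = 0.
Proof.
rewrite qform1E => /eqP; rewrite psumr_eq0 => [/allP H|j _]; last exact: sqr_ge0.
apply/rowP => j; rewrite mxE; have := H j (mem_index_enum j).
by rewrite implyTb sqrf_eq0 => /eqP.
Qed.

Lemma qformZ Q a v : qform Q (a *: v) = a ^+ 2 * qform Q v.
Proof.
rewrite !qformE mulr_sumr; apply: eq_bigr => j _.
rewrite mxE; under eq_bigr do rewrite mxE -mulrA.
by rewrite -mulr_sumr mulrACA expr2.
Qed.

Lemma qformN Q v : qform (- Q) v = - qform Q v.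
Proof. by rewrite /qform mulmxN mulNmx mxE. Qed.

Lemma qform0 Q : qform Q 0 = 0.
Proof. by rewrite /qform !mul0mx mxE. Qed.

Lemma coord_sqr_le_qform1 v j : v 0 j ^+ 2 <= qform 1%:M v.
Proof.
by rewrite qform1E (bigD1 j) //= lerDl; apply: sumr_ge0 => i _; exact: sqr_ge0.
Qed.

Definition unit_sphere_in B := [set v | (v <= B)%MS /\ qform 1%:M v = 1].

Lemma unit_sphere_in_closed B : closed (unit_sphere_in B).
Proof.
pose K := cokermx B.
have -> : unit_sphere_in B =
    qform (K *m K^T) @^-1` [set 0] `&` qform 1%:M @^-1` [set 1].
  apply/seteqP; split => v /= [vB v1]; split => //.
    by move: vB; rewrite submxE => /eqP vK; rewrite /qform mulmxA vK !mul0mx mxE.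
  rewrite submxE; apply/eqP/qform1_eq0.
  by rewrite /qform mulmx1 trmx_mul !mulmxA; move: vB; rewrite /qform !mulmxA.
by apply: closedI; apply: preimage_closed;
  try exact: closed_eq; move=> x _; exact: qform_continuous.
Qed.

Lemma unit_sphere_in_compact B : compact (unit_sphere_in B).
Proof.
have box : compact [set v : 'rV[R]_n | forall j, v ord0 j \in `[-1, 1]].
  by apply: (@rV_compact R n (fun=> `[-1, 1]%classic)) => _; exact: segment_compact.
apply: subclosed_compact (unit_sphere_in_closed B) box _ => v [_ v1] j /=.
have := coord_sqr_le_qform1 v j; rewrite v1 in_itv /= => h.
by rewrite -ler_norml -(expr_le1 (n:=2)) // real_normK ?num_real.
Qed.

Lemma qform_normalize Q B v : (v <= B)%MS -> v != 0 ->
  let w := (Num.sqrt (qform 1%:M v))^-1 *: v in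
  unit_sphere_in B w /\ qform Q v = qform Q w * qform 1%:M v.
Proof.
move=> vB v0 w; have qv : 0 < qform 1%:M v.
  by rewrite lt0r qform1_ge0 andbT; apply: contra v0 => /eqP/qform1_eq0 ->.
have sq : (Num.sqrt (qform 1%:M v))^-1 ^+ 2 = (qform 1%:M v)^-1.
  by rewrite exprVn sqr_sqrtr // ltW.
split; first split.
- by rewrite scalemx_sub.
- by rewrite qformZ sq mulVf ?gt_eqF.
by rewrite qformZ sq mulrAC mulVf ?gt_eqF // mul1r.
Qed.

(* The minimum of [qform Q] on the compact unit sphere of the row space of B. *)
Lemma qform_min_on_row_space Q B : exists m : R,
  (forall v, (v <= B)%MS -> m * qform 1%:M v <= qform Q v) /\
  ((forall v, (v <= B)%MS -> v != 0 -> 0 < qform Q v) -> 0 < m).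
Proof.
have [[u uS] | empty] := pselect (unit_sphere_in B !=set0); last first.
  exists 1; split=> // v vB; have [->|v0] := eqVneq v 0; first by rewrite !qform0 mulr0.
  by exfalso; apply: empty; have [wS _] := qform_normalize Q _ _ vB v0; eexists; exact: wS.
have cQ : {within unit_sphere_in B, continuous (qform Q)}.
  exact/continuous_subspaceT/qform_continuous.
have [c cS cmin] := EVT_min_rV (ex_intro _ u uS) (unit_sphere_in_compact B) cQ.
move: cS; rewrite inE => -[cB c1].
exists (qform Q c); split.
  move=> v vB; have [->|v0] := eqVneq v 0; first by rewrite !qform0 mulr0.
  have [wS ->] := qform_normalize Q _ _ vB v0.
  by rewrite ler_wpM2r ?qform1_ge0 // cmin // inE.
apply=> //; apply/negP => /eqP c0.
by move: c1; rewrite c0 qform0 => /eqP; rewrite eq_sym oner_eq0.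
Qed.

End QuadraticForm.
Arguments qform {R n}.
Arguments qform_min_on_row_space {R n}.

(* MathComp row vectors are multiplied on the right, so a matrix [M : mat]
   is represented by the transpose [tmx M] of its leading n x n block. *)
Section Representation.
Local Open Scope ring_scope.
Variable n : nat.

Definition rowv (x : vec) : 'rV[R]_n := \row_(i < n) x i.
Definition tmx (M : mat) : 'M[R]_n := \matrix_(i < n, j < n) M j i.
Definition vec_of_row (v : 'rV[R]_n) : vec :=
  fun i => oapp (fun j : 'I_n => v 0 j) 0 (insub i).
Definition mat_of_tmx (Q : 'M[R]_n) : mat := fun a b =>
  match insub b, insub a with Some i, Some j => Q i j | _, _ => 0 end.

Lemma sumR_big (f : nat -> R) k : sumR k f = \sum_(i < k) f i.
Proof. by elim: k => [|k IH] /=; rewrite ?big_ord0 // big_ord_recr /= IH. Qed.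

Lemma veq_rowv x y : veq n x y <-> rowv x = rowv y.
Proof.
split => [H|E i /ssrnat.ltP hi].
  by apply/rowP => j; rewrite !mxE; apply: H; apply/ssrnat.ltP.
by have := congr1 (fun v : 'rV[R]_n => v 0 (Ordinal hi)) E; rewrite !mxE.
Qed.

Lemma rowv_vec_of_row v : rowv (vec_of_row v) = v.
Proof. by apply/rowP => j; rewrite !mxE /vec_of_row valK. Qed.

Lemma rowv_vzero : rowv vzero = 0.
Proof. by apply/rowP => j; rewrite !mxE. Qed.

Lemma rowv_mv M x : rowv (mv n M x) = rowv x *m tmx M.
Proof.
apply/rowP => j; rewrite !mxE /mv sumR_big; apply: eq_bigr => i _.
by rewrite !mxE mulrC.
Qed.

Lemma tmx_mm M K : tmx (mm n M K) = tmx K *m tmx M.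
Proof.
apply/matrixP => i j; rewrite !mxE /mm sumR_big; apply: eq_bigr => l _.
by rewrite !mxE mulrC.
Qed.

Lemma tmx_idm : tmx idm = 1%:M.
Proof.
apply/matrixP => i j; rewrite !mxE /idm.
have [->|ne] := eqVneq i j; first by rewrite PeanoNat.Nat.eqb_refl.
by case: PeanoNat.Nat.eqb_spec => // /val_inj ij; rewrite ij eqxx in ne.
Qed.

Lemma tmx_mat_of_tmx Q : tmx (mat_of_tmx Q) = Q.
Proof. by apply/matrixP => i j; rewrite !mxE /mat_of_tmx !valK. Qed.

Lemma inIm_submx M y : inIm n M y <-> (rowv y <= tmx M)%MS.
Proof.
split => [[z Hz]|/submxP [D HD]].
  by apply/submxP; exists (rowv z); rewrite -rowv_mv; apply/esym/veq_rowv.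
by exists (vec_of_row D); apply/veq_rowv; rewrite rowv_mv rowv_vec_of_row HD.
Qed.

Lemma bil_qform P x y : bil n P x y = (rowv y *m tmx P *m (rowv x)^T) 0 0.
Proof.
rewrite -rowv_mv /bil sumR_big !mxE; apply: eq_bigr => i _.
by rewrite !mxE mulrC.
Qed.

Lemma quad_qform P x : quad n P x = qform (tmx P) (rowv x).
Proof. exact: bil_qform. Qed.

Lemma sqnorm_qform x : sqnorm n x = qform 1%:M (rowv x).
Proof.
by rewrite qform1E /sqnorm sumR_big; apply: eq_bigr => i _; rewrite RpowE mxE.
Qed.

End Representation.

Section PowerImages.
Local Open Scope ring_scope.
Variables (n : nat) (M : mat).

Let powt k := tmx n (mpow n M k).

Lemma powtS k : powt k.+1 = powt k *m tmx n M.
Proof. by rewrite /powt /= tmx_mm. Qed.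

Lemma powtSr k : powt k.+1 = tmx n M *m powt k.
Proof.
elim: k => [|k IH]; first by rewrite powtS /powt /= tmx_idm mul1mx mulmx1.
by rewrite powtS {1}IH -mulmxA -powtS.
Qed.

Lemma powtS_sub k : (powt k.+1 <= powt k)%MS.
Proof. by rewrite powtSr submxMl. Qed.

Lemma im_stable_submx k : im_stable n M k <-> (powt k <= powt k.+1)%MS.
Proof.
split => [st|h y].
  apply/row_subP => i; have := proj2 (st (vec_of_row n (row i (powt k)))).
  by rewrite !inIm_submx rowv_vec_of_row; apply; exact: row_sub.
rewrite !inIm_submx; split => hy; first exact: submx_trans hy (powtS_sub k).
exact: submx_trans hy h.
Qed.

(* Equal ranks of the nested images force equal kernels. *)
Lemma im_stable_mul_injective k y : im_stable n M k -> inIm n (mpow n M k) y ->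
  veq n (mv n M y) vzero -> veq n y vzero.
Proof.
move=> /im_stable_submx st /inIm_submx /submxP [D HD] /veq_rowv.
rewrite rowv_mv rowv_vzero HD -mulmxA -powtS => /sub_kermxP DK.
have sK : (kermx (powt k) <= kermx (powt k.+1))%MS.
  by apply/sub_kermxP; rewrite powtS mulmxA mulmx_ker mul0mx.
have rk : \rank (powt k.+1) = \rank (powt k).
  by apply/eqmx_rank; rewrite /eqmx st powtS_sub.
have sK' : (kermx (powt k.+1) <= kermx (powt k))%MS.
  by rewrite -(mxrank_leqif_sup sK).2 !mxrank_ker rk.
apply/veq_rowv; rewrite rowv_vzero HD; apply/sub_kermxP.
exact: submx_trans DK sK'.
Qed.

(* Each strict inclusion drops the rank, which starts at most at n. *)
Lemma exists_im_stable : exists k, (powt k <= powt k.+1)%MS.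
Proof.
apply: contrapT => nP.
have nk k : ~~ (powt k <= powt k.+1)%MS by apply/negP => Pk; apply: nP; exists k.
have rk k : (\rank (powt k) + k <= n)%N.
  elim: k => [|k IH]; first by rewrite addn0 rank_leq_col.
  have : (powt k.+1 < powt k)%MS by rewrite /ltmx powtS_sub nk.
  rewrite ltmxErank => /andP[_ lt].
  by rewrite addnS; apply: leq_trans IH; rewrite ltn_add2r.
by have := rk n.+1; rewrite addnS ltnNge leq_addl.
Qed.

Lemma least_im_stable_exists : exists k, im_stable n M k /\ forall j, lt j k -> ~ im_stable n M j.
Proof.
case: (ex_minnP exists_im_stable) => k Pk kmin.
exists k; split => [|j /ssrnat.ltP jk /im_stable_submx Pj]; first exact/im_stable_submx.
by have := kmin j Pj; rewrite leqNgt jk.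
Qed.

End PowerImages.

Lemma inIm_kernel n M : exists L : mat, forall y,
  inIm n M y <-> veq n (mv n L y) vzero.
Proof.
exists (mat_of_tmx n (cokermx (tmx n M))) => y.
rewrite inIm_submx veq_rowv rowv_mv tmx_mat_of_tmx rowv_vzero submxE.
by split => [/eqP|->].
Qed.

Lemma mv_mm n A B z : veq n (mv n (mm n A B) z) (mv n A (mv n B z)).
Proof. by apply/veq_rowv; rewrite !rowv_mv tmx_mm mulmxA. Qed.

Lemma mv_idm n z : veq n (mv n idm z) z.
Proof. by apply/veq_rowv; rewrite rowv_mv tmx_idm mulmx1. Qed.

Lemma bil_sym n P x y : (forall i j, lt i n -> lt j n -> P i j = P j i) ->
  bil n P x y = bil n P y x.
Proof.
move=> HP; have tP : ((tmx n P)^T = tmx n P)%R.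
  by apply/matrixP => i j; rewrite !mxE; apply: HP; exact/ssrnat.ltP.
rewrite !bil_qform.
transitivity (((rowv n y *m tmx n P *m (rowv n x)^T)^T) 0 0)%R; first by rewrite [RHS]mxE.
by rewrite !trmx_mul trmxK tP mulmxA.
Qed.

Lemma quad_mv_quad n P M : exists Q : mat, forall y,
  quad n P (mv n M y) = quad n Q y.
Proof.
exists (mat_of_tmx n (tmx n M *m tmx n P *m (tmx n M)^T)%R) => y.
by rewrite !quad_qform tmx_mat_of_tmx /qform rowv_mv trmx_mul !mulmxA.
Qed.

Lemma bil_mv_quad n P M : exists Q : mat, forall y,
  bil n P (mv n M y) y = quad n Q y.
Proof.
exists (mat_of_tmx n (tmx n P *m (tmx n M)^T)%R) => y.
by rewrite quad_qform bil_qform tmx_mat_of_tmx /qform rowv_mv trmx_mul !mulmxA.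
Qed.

Lemma quad_coercive_on_inIm n Q B :
  (forall v, inIm n B v -> ~ veq n v vzero -> 0 < quad n Q v) ->
  exists c, 0 < c /\ forall v, inIm n B v -> c * sqnorm n v <= quad n Q v.
Proof.
move=> pos; have [m [Hm Hp]] := qform_min_on_row_space (tmx n Q) (tmx n B).
exists m; split.
  apply/RltP/Hp => w wB w0; apply/RltP.
  have := pos (vec_of_row n w); rewrite quad_qform rowv_vec_of_row; apply.
    by apply/inIm_submx; rewrite rowv_vec_of_row.
  by move/veq_rowv; rewrite rowv_vec_of_row rowv_vzero; apply/eqP.
by move=> v /inIm_submx vB; apply/RleP; rewrite sqnorm_qform quad_qform; exact: Hm.
Qed.

Lemma quad_le_sqnorm n Q : exists c, 0 < c /\ forall v, quad n Q v <= c * sqnorm n v.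
Proof.
have [m [Hm _]] := qform_min_on_row_space (- tmx n Q)%R 1%:M.
exists (Num.max 1 (- m))%R; split; first by apply/RltP; rewrite lt_max ltr01.
move=> v; apply/RleP; rewrite sqnorm_qform quad_qform.
have := Hm (rowv n v) (submx1 _).
rewrite qformN lerNr => h; apply: (le_trans h).
by rewrite -mulNr ler_wpM2r ?qform1_ge0 // le_max lexx orbT.
Qed.

Lemma index_exists n E Ainv : exists k, is_index n E Ainv k.
Proof. exact: least_im_stable_exists. Qed.

End LinearAlgebra.

Import LinearAlgebra.

Lemma sumR_ext k f g : (forall i, (i < k)%nat -> f i = g i) -> sumR k f = sumR k g.
Proof.
induction k as [|k IH]; intros H; simpl; [reflexivity|].
rewrite IH by (intros; apply H; lia). rewrite H by lia. reflexivity.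
Qed.

Lemma sumR_plus k f g : sumR k (fun i => f i + g i) = sumR k f + sumR k g.
Proof. induction k as [|k IH]; simpl; [lra|]. rewrite IH. lra. Qed.

Lemma sumR_scal k c f : sumR k (fun i => c * f i) = c * sumR k f.
Proof. induction k as [|k IH]; simpl; [lra|]. rewrite IH. lra. Qed.

Lemma sumR_nonneg k f : (forall i, (i < k)%nat -> 0 <= f i) -> 0 <= sumR k f.
Proof.
induction k as [|k IH]; simpl; intros H; [lra|].
assert (0 <= f k) by (apply H; lia).
assert (0 <= sumR k f) by (apply IH; intros; apply H; lia).
lra.
Qed.

Lemma sqnorm_nonneg n x : 0 <= sqnorm n x.
Proof. apply sumR_nonneg. intros. simpl. nra. Qed.

Lemma veq_refl n x : veq n x x.
Proof. intros i _; reflexivity. Qed.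

Lemma veq_sym n x y : veq n x y -> veq n y x.
Proof. intros H i hi; rewrite H; auto. Qed.

Lemma veq_trans n x y z : veq n x y -> veq n y z -> veq n x z.
Proof. intros H1 H2 i hi; rewrite H1, H2; auto. Qed.

Lemma mv_veq n M x y : veq n x y -> forall i, mv n M x i = mv n M y i.
Proof. intros H i; apply sumR_ext; intros j hj; rewrite H; auto. Qed.

Lemma bil_veq n P x x' y y' : veq n x x' -> veq n y y' -> bil n P x y = bil n P x' y'.
Proof.
intros Hx Hy; apply sumR_ext; intros i hi.
rewrite Hx by auto. rewrite (mv_veq n P y y' Hy). reflexivity.
Qed.

Lemma quad_veq n P x x' : veq n x x' -> quad n P x = quad n P x'.
Proof. intros; apply bil_veq; auto. Qed.

Lemma quad_scal n c Q y : quad n (fun a b => c * Q a b) y = c * quad n Q y.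
Proof.
unfold quad, bil, mv. rewrite <- sumR_scal. apply sumR_ext; intros i hi.
rewrite (sumR_ext n (fun j => c * Q i j * y j) (fun j => c * (Q i j * y j)))
  by (intros; ring).
rewrite sumR_scal. ring.
Qed.

Lemma exists_pos_uniform k (Q : nat -> R -> Prop) :
  (forall p d d', 0 < d' <= d -> Q p d -> Q p d') ->
  (forall p, (p < k)%nat -> exists d, 0 < d /\ Q p d) ->
  exists d, 0 < d /\ forall p, (p < k)%nat -> Q p d.
Proof.
intros Hmono; induction k as [|k IH]; intros H.
- exists 1; split; [lra | intros; lia].
- destruct IH as [d [Hd Hq]]; [intros; apply H; lia|].
  destruct (H k) as [d' [Hd' Hq']]; [lia|].
  exists (Rmin d d'); split; [apply Rmin_case; lra|].
  intros p hp; destruct (Nat.eq_dec p k) as [->|ne].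
  + apply (Hmono k d'); auto. split; [apply Rmin_case; lra | apply Rmin_r].
  + apply (Hmono p d); [split; [apply Rmin_case; lra | apply Rmin_l] | apply Hq; lia].
Qed.

Lemma derivable_pt_lim_sumR k (f : nat -> R -> R) d s :
  (forall j, (j < k)%nat -> derivable_pt_lim (f j) s (d j)) ->
  derivable_pt_lim (fun u => sumR k (fun j => f j u)) s (sumR k d).
Proof.
induction k as [|k IH]; intros H; simpl.
- apply derivable_pt_lim_const.
- apply (derivable_pt_lim_plus (fun u => sumR k (fun j => f j u)) (f k)).
  + apply IH; intros; apply H; lia.
  + apply H; lia.
Qed.

Lemma derivable_pt_lim_mv n M x s dx : has_deriv n x s dx ->
  forall p, derivable_pt_lim (fun u => mv n M (x u) p) s (mv n M dx p).
Proof.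
intros H p. apply (derivable_pt_lim_sumR n (fun j u => M p j * x u j)).
intros j hj. apply derivable_pt_lim_scal, H; auto.
Qed.

Lemma derivable_pt_lim_quad n P x s dx : has_deriv n x s dx ->
  derivable_pt_lim (fun u => quad n P (x u)) s (bil n P dx (x s) + bil n P (x s) dx).
Proof.
intros H. unfold bil. rewrite <- sumR_plus.
apply (derivable_pt_lim_sumR n (fun p u => x u p * mv n P (x u) p)); intros p hp.
apply derivable_pt_lim_mult; [apply H; auto | apply derivable_pt_lim_mv; auto].
Qed.

Lemma derivable_pt_lim_exp_scal c t :
  derivable_pt_lim (fun u => exp (c * u)) t (exp (c * t) * c).
Proof.
replace (exp (c * t) * c) with (exp (c * t) * (c * 1)) by ring.
apply (derivable_pt_lim_comp (fun u => c * u) exp).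
- apply derivable_pt_lim_scal, derivable_pt_lim_id.
- apply derivable_pt_lim_exp.
Qed.

Lemma derivable_pt_lim_locally_zero f l r s d :
  (forall u, l < u < r -> f u = 0) -> l < s < r -> derivable_pt_lim f s d -> d = 0.
Proof.
intros Hz Hs Hd. apply (uniqueness_limite f s d 0 Hd).
intros eps Heps.
assert (Hp : 0 < Rmin (s - l) (r - s)) by (apply Rmin_case; lra).
exists (mkposreal _ Hp); simpl; intros h hne hlt.
pose proof (Rmin_l (s - l) (r - s)); pose proof (Rmin_r (s - l) (r - s)).
apply Rabs_def2 in hlt.
rewrite (Hz (s + h)), (Hz s) by lra.
unfold Rminus. rewrite Rplus_opp_r, Rdiv_0_l, Rplus_0_l, Ropp_0, Rabs_R0. lra.
Qed.

Lemma nonincreasing_of_deriv_nonpos g l r :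
  (forall s, l < s < r -> exists d, derivable_pt_lim g s d /\ d <= 0) ->
  forall s u, l < s -> s <= u -> u < r -> g u <= g s.
Proof.
intros H s u Hs Hsu Hu.
destruct (Req_dec s u) as [<-|ne]; [lra|].
assert (H' : forall c, exists d, l < c < r -> derivable_pt_lim g c d /\ d <= 0).
{ intros c. destruct (classic (l < c < r)) as [hc|hc].
  - destruct (H c hc) as [d Hd]; exists d; auto.
  - exists 0; intros; contradiction. }
destruct (functional_choice _ H') as [g' Hg'].
destruct (MVT_cor2 g g' s u) as [c [Hc1 Hc2]].
- lra.
- intros c hc; apply Hg'; lra.
- assert (g' c <= 0) by (apply Hg'; lra). nra.
Qed.

Lemma has_deriv_continuous n x t dx : has_deriv n x t dx ->
  right_lim n x t (x t) /\ left_lim n x t (x t).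
Proof.
intros H.
assert (Hd : forall eps, eps > 0 -> exists d, 0 < d /\ forall p, (p < n)%nat ->
          forall s, Rabs (s - t) < d -> Rabs (x s p - x t p) < eps).
{ intros eps Heps.
  apply (exists_pos_uniform n (fun p d => forall s, Rabs (s - t) < d -> Rabs (x s p - x t p) < eps)).
  - intros p d d' Hdd Hq s Hs; apply Hq; lra.
  - intros p hp.
    assert (Hc : continuity_pt (fun s => x s p) t)
      by (apply derivable_continuous_pt; exists (dx p); apply H; auto).
    destruct (Hc eps Heps) as [alp [Halp Ha]].
    exists alp; split; [lra|]. intros s Hs.
    destruct (Req_dec s t) as [->|ne].
    + unfold Rminus; rewrite Rplus_opp_r, Rabs_R0; lra.
    + apply (Ha s); repeat split; auto. }
split; intros eps Heps; destruct (Hd eps Heps) as [d [Hd0 Hq]];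
  exists d; split; auto; intros s Hs p hp; apply Hq; auto; apply Rabs_def1; lra.
Qed.

Lemma limit1_in_le f D L t c : limit1_in f D L t ->
  (forall d, d > 0 -> exists s, D s /\ Rabs (s - t) < d) ->
  (exists d0, d0 > 0 /\ forall s, D s -> Rabs (s - t) < d0 -> f s <= c) -> L <= c.
Proof.
intros Hl Hne [d0 [Hd0 Hb]].
destruct (Rle_dec L c) as [h|h]; [auto|exfalso].
destruct (Hl (L - c)) as [alp [Halp Ha]]; [lra|].
destruct (Hne (Rmin alp d0)) as [s [Ds Hs]]; [apply Rmin_case; lra|].
pose proof (Rmin_l alp d0); pose proof (Rmin_r alp d0).
assert (h1 : Rabs (f s - L) < L - c) by (apply (Ha s); split; [auto | simpl; unfold R_dist; lra]).
assert (h2 := Hb s Ds ltac:(lra)).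
apply Rabs_def2 in h1. lra.
Qed.

Lemma limit1_in_ge f D L t c : limit1_in f D L t ->
  (forall d, d > 0 -> exists s, D s /\ Rabs (s - t) < d) ->
  (exists d0, d0 > 0 /\ forall s, D s -> Rabs (s - t) < d0 -> c <= f s) -> c <= L.
Proof.
intros Hl Hne [d0 [Hd0 Hb]].
enough (- L <= - c) by lra.
apply (limit1_in_le (fun s => - f s) D (- L) t (- c)); auto.
- apply limit_Ropp; auto.
- exists d0; split; auto. intros s Ds Hs; specialize (Hb s Ds Hs); lra.
Qed.

Lemma points_right_near t d : d > 0 -> exists s, t < s /\ Rabs (s - t) < d.
Proof. intros Hd; exists (t + d / 2); split; [lra|]. rewrite Rabs_right; lra. Qed.

Lemma points_left_near t d : d > 0 -> exists s, s < t /\ Rabs (s - t) < d.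
Proof. intros Hd; exists (t - d / 2); split; [lra|]. rewrite Rabs_left; lra. Qed.

Lemma limit1_in_const c D t : limit1_in (fun _ => c) D c t.
Proof. exact (limit_free (fun _ => c) D 0 t). Qed.

Lemma limit1_in_sumR k (f : nat -> R -> R) L D t :
  (forall j, (j < k)%nat -> limit1_in (f j) D (L j) t) ->
  limit1_in (fun u => sumR k (fun j => f j u)) D (sumR k L) t.
Proof.
induction k as [|k IH]; intros H; simpl.
- apply limit1_in_const.
- apply (limit_plus (fun u => sumR k (fun j => f j u)) (f k)).
  + apply IH; intros; apply H; lia.
  + apply H; lia.
Qed.

Lemma limit1_in_mv n M x l D t :
  (forall p, (p < n)%nat -> limit1_in (fun s => x s p) D (l p) t) ->
  forall q, limit1_in (fun s => mv n M (x s) q) D (mv n M l q) t.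
Proof.
intros H q. apply (limit1_in_sumR n (fun j s => M q j * x s j)); intros j hj.
apply (limit_mul (fun _ => M q j) (fun s => x s j)); [apply limit1_in_const | auto].
Qed.

Lemma limit1_in_quad n P x l D t :
  (forall p, (p < n)%nat -> limit1_in (fun s => x s p) D (l p) t) ->
  limit1_in (fun s => quad n P (x s)) D (quad n P l) t.
Proof.
intros H. apply (limit1_in_sumR n (fun p s => x s p * mv n P (x s) p)); intros p hp.
apply (limit_mul (fun s => x s p) (fun s => mv n P (x s) p)); [auto | apply limit1_in_mv; auto].
Qed.

Lemma right_lim_limit1_in n x t l : right_lim n x t l ->
  forall p, (p < n)%nat -> limit1_in (fun s => x s p) (fun s => t < s) (l p) t.
Proof.
intros H p hp eps Heps. destruct (H eps Heps) as [d [Hd Hx]].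
exists d; split; auto. intros s [Ds Hs]. simpl in *; unfold R_dist in *.
apply Rabs_def2 in Hs. apply Hx; auto; lra.
Qed.

Lemma left_lim_limit1_in n x t l : left_lim n x t l ->
  forall p, (p < n)%nat -> limit1_in (fun s => x s p) (fun s => s < t) (l p) t.
Proof.
intros H p hp eps Heps. destruct (H eps Heps) as [d [Hd Hx]].
exists d; split; auto. intros s [Ds Hs]. simpl in *; unfold R_dist in *.
apply Rabs_def2 in Hs. apply Hx; auto; lra.
Qed.

Lemma limit1_in_exp_scal c t D : limit1_in (fun u => exp (c * u)) D (exp (c * t)) t.
Proof.
intros eps Heps.
assert (Hc : continuity_pt (fun u => exp (c * u)) t).
{ apply derivable_continuous_pt. eexists. apply derivable_pt_lim_exp_scal. }
destruct (Hc eps Heps) as [alp [Halp Ha]].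
exists alp; split; auto. intros s [Ds Hs].
destruct (Req_dec s t) as [->|ne].
- simpl; unfold R_dist, Rminus; rewrite Rplus_opp_r, Rabs_R0; lra.
- apply Ha; repeat split; auto.
Qed.

Lemma nonincreasing_between_limits G l r Ll Lr :
  (forall s u, l < s -> s <= u -> u < r -> G u <= G s) ->
  limit1_in G (fun s => l < s) Ll l -> limit1_in G (fun s => s < r) Lr r ->
  forall s, l < s < r -> Lr <= G s <= Ll.
Proof.
intros Hmono Hl Hr s Hs; split.
- apply (limit1_in_le G (fun u => u < r) Lr r); auto using points_left_near.
  exists (r - s); split; [lra|]. intros u Du Hu. apply Rabs_def2 in Hu. apply Hmono; lra.
- apply (limit1_in_ge G (fun u => l < u) Ll l); auto using points_right_near.
  exists (s - l); split; [lra|]. intros u Du Hu. apply Rabs_def2 in Hu. apply Hmono; lra.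
Qed.

Lemma descriptor_solve n E A Ainv dx y : is_inverse n A Ainv ->
  veq n (mv n E dx) (mv n A y) -> veq n (mv n (mm n Ainv E) dx) y.
Proof.
intros Hinv H.
eapply veq_trans; [apply mv_mm|].
eapply veq_trans; [intros i hi; apply (mv_veq n Ainv _ _ H)|].
eapply veq_trans; [apply veq_sym, mv_mm|].
eapply veq_trans; [|apply mv_idm].
intros i hi; apply sumR_ext; intros j hj. rewrite (proj2 (Hinv i j hi hj)). reflexivity.
Qed.

Lemma inIm_mpow0 n M y : inIm n (mpow n M 0) y.
Proof. exists y; apply mv_idm. Qed.

(* A kernel description of the image turns "x stays in it" into linear
   equations, which pass to derivatives. *)
Lemma has_deriv_inIm n K (x : R -> vec) l r s dx :
  (forall u, l < u < r -> inIm n K (x u)) -> l < s < r ->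
  has_deriv n x s dx -> inIm n K dx.
Proof.
intros H Hs Hd.
destruct (inIm_kernel n K) as [L HL].
apply HL; intros p hp.
apply (derivable_pt_lim_locally_zero (fun u => mv n L (x u) p) l r s _
  (fun u Hu => proj1 (HL (x u)) (H u Hu) p hp) Hs (derivable_pt_lim_mv n L x s dx Hd p)).
Qed.

Lemma solution_inIm_mpow n M (x : R -> vec) l r :
  (forall s, l < s < r -> exists dx, has_deriv n x s dx /\ veq n (mv n M dx) (x s)) ->
  forall k s, l < s < r -> inIm n (mpow n M k) (x s).
Proof.
intros Hode k; induction k as [|k IH]; intros s Hs; [apply inIm_mpow0|].
destruct (Hode s Hs) as [dx [Hd Hm]].
destruct (has_deriv_inIm n _ x l r s dx IH Hs Hd) as [z Hz].
exists z. eapply veq_trans; [apply mv_mm|].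
eapply veq_trans; [|exact Hm].
intros i hi; apply mv_veq; auto.
Qed.

Lemma index_unique n E Ainv k k' : is_index n E Ainv k -> is_index n E Ainv k' -> k = k'.
Proof.
intros [H1 H2] [H1' H2'].
destruct (Nat.lt_total k k') as [h|[h|h]]; auto.
- exfalso; apply (H2' k h H1).
- exfalso; apply (H2 k' h H1').
Qed.

Lemma inC_iff n E Ainv k x : is_index n E Ainv k ->
  inC n E Ainv x <-> inIm n (mpow n (mm n Ainv E) k) x.
Proof.
intros Hk; split.
- intros [k' [Hk' Hx]]. rewrite (index_unique n E Ainv k k' Hk Hk'); auto.
- intros Hx; exists k; auto.
Qed.

Lemma inC_mv n E Ainv y : inC n E Ainv y -> inC n E Ainv (mv n (mm n Ainv E) y).
Proof.
intros [k [Hk [z Hz]]]. exists k; split; auto.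
apply (proj1 Hk). exists z. eapply veq_trans; [apply mv_mm|].
intros i hi; apply mv_veq; auto.
Qed.

(* With M = A^{-1} E, the last clause bounds the derivative of x^T P x along
   x' = y, M y = x, by -c x^T P x. *)
Definition lyapunov_bounds n E Ainv P c : Prop :=
  (forall x, inC n E Ainv x -> c * sqnorm n x <= quad n P x) /\
  (forall x, quad n P x <= / c * sqnorm n x) /\
  (forall y, inC n E Ainv y ->
     2 * bil n P (mv n (mm n Ainv E) y) y <= - c * quad n P (mv n (mm n Ainv E) y)).

Lemma lyapunov_bounds_le n E Ainv P c c' : 0 < c' <= c ->
  lyapunov_bounds n E Ainv P c -> lyapunov_bounds n E Ainv P c'.
Proof.
intros Hc [G1 [G2 G3]].
assert (Hq : forall x, inC n E Ainv x -> 0 <= quad n P x).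
{ intros x Hx. pose proof (G1 x Hx). pose proof (sqnorm_nonneg n x). nra. }
split; [|split].
- intros x Hx. pose proof (G1 x Hx). pose proof (sqnorm_nonneg n x). nra.
- intros x. pose proof (G2 x). pose proof (sqnorm_nonneg n x).
  assert (/ c <= / c') by (apply Rinv_le_contravar; lra). nra.
- intros y Hy. pose proof (G3 y Hy). pose proof (Hq _ (inC_mv n E Ainv y Hy)). nra.
Qed.

Lemma lyapunov_coercive n E Ainv P : lyapunov_matrix n E Ainv P ->
  exists c, 0 < c /\ forall x, inC n E Ainv x -> c * sqnorm n x <= quad n P x.
Proof.
intros [_ [Hpos _]].
destruct (index_exists n E Ainv) as [k Hk].
destruct (quad_coercive_on_inIm n P (mpow n (mm n Ainv E) k)) as [c [Hc H]].
- intros v Hv; apply Hpos, (inC_iff n E Ainv k v Hk), Hv.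
- exists c; split; auto. intros x Hx; apply H, (inC_iff n E Ainv k x Hk), Hx.
Qed.

(* The strict inequality of [lyapunov_matrix] holds at x = M y for every
   nonzero y in C, because M is injective on C. *)
Lemma lyapunov_dissipative n E Ainv P : lyapunov_matrix n E Ainv P ->
  exists c, 0 < c /\ forall y, inC n E Ainv y ->
    2 * bil n P (mv n (mm n Ainv E) y) y <= - c * sqnorm n y.
Proof.
intros [_ [_ Hneg]].
set (M := mm n Ainv E).
destruct (index_exists n E Ainv) as [k Hk].
destruct (bil_mv_quad n P M) as [Q HQ].
destruct (quad_coercive_on_inIm n (fun a b => -2 * Q a b) (mpow n M k)) as [c [Hc H]].
- intros v Hv Hnz. rewrite quad_scal, <- HQ.
  assert (HvC : inC n E Ainv v) by (apply (inC_iff n E Ainv k v Hk), Hv).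
  enough (2 * bil n P (mv n M v) v < 0) by lra.
  apply Hneg; [apply inC_mv, HvC | apply HvC | apply veq_refl |].
  intros Hz; apply Hnz, (im_stable_mul_injective n M k); [apply Hk | |]; auto.
- exists c; split; auto. intros y Hy.
  pose proof (H y (proj1 (inC_iff n E Ainv k y Hk) Hy)) as h.
  rewrite quad_scal, <- HQ in h. lra.
Qed.

Lemma lyapunov_bounds_exist n E Ainv P : lyapunov_matrix n E Ainv P ->
  exists c, 0 < c /\ lyapunov_bounds n E Ainv P c.
Proof.
intros HL.
destruct (lyapunov_coercive n E Ainv P HL) as [c1 [Hc1 H1]].
destruct (quad_le_sqnorm n P) as [c2 [Hc2 H2]].
destruct (lyapunov_dissipative n E Ainv P HL) as [c3 [Hc3 H3]].
destruct (quad_mv_quad n P (mm n Ainv E)) as [Q HQ].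
destruct (quad_le_sqnorm n Q) as [c4 [Hc4 H4]].
set (c := Rmin c1 (Rmin (/ c2) (c3 / c4))).
assert (Hc2' : 0 < / c2) by (apply Rinv_0_lt_compat; auto).
assert (Hc34 : 0 < c3 / c4) by (apply Rdiv_lt_0_compat; auto).
assert (Hc : 0 < c) by (unfold c; repeat apply Rmin_case; lra).
assert (Hcc1 : c <= c1) by apply Rmin_l.
assert (Hcc2 : c <= / c2) by (eapply Rle_trans; [apply Rmin_r | apply Rmin_l]).
assert (Hcc3 : c <= c3 / c4) by (eapply Rle_trans; [apply Rmin_r | apply Rmin_r]).
exists c; split; [exact Hc | split; [|split]].
- intros x Hx. pose proof (H1 x Hx). pose proof (sqnorm_nonneg n x). nra.
- intros x. pose proof (H2 x). pose proof (sqnorm_nonneg n x).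
  assert (c2 <= / c) by (rewrite <- (Rinv_inv c2); apply Rinv_le_contravar; lra).
  nra.
- intros y Hy. pose proof (H3 y Hy). pose proof (H4 y) as h4. rewrite <- HQ in h4.
  pose proof (H1 _ (inC_mv n E Ainv y Hy)).
  pose proof (sqnorm_nonneg n y). pose proof (sqnorm_nonneg n (mv n (mm n Ainv E) y)).
  assert (Hcc4 : c * c4 <= c3).
  { apply Rmult_le_reg_r with (/ c4); [apply Rinv_0_lt_compat; lra|].
    rewrite Rmult_assoc, Rinv_r by lra. lra. }
  assert (0 <= c * (c4 * sqnorm n y - quad n P (mv n (mm n Ainv E) y))) by (apply Rmult_le_pos; lra).
  assert (0 <= (c3 - c * c4) * sqnorm n y) by (apply Rmult_le_pos; lra).
  lra.
Qed.

Lemma lyapunov_bounds_uniform n N E Ainv P :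
  (forall i, (1 <= i <= N)%nat -> lyapunov_matrix n (E i) (Ainv i) (P i)) ->
  exists c, 0 < c /\ forall i, (1 <= i <= N)%nat -> lyapunov_bounds n (E i) (Ainv i) (P i) c.
Proof.
intros H.
destruct (exists_pos_uniform N (fun p => lyapunov_bounds n (E (S p)) (Ainv (S p)) (P (S p))))
  as [c [Hc Hg]].
- intros p d d' Hd; apply lyapunov_bounds_le; auto.
- intros p hp; apply lyapunov_bounds_exist, H; lia.
- exists c; split; auto. intros [|i] hi; [lia|]. apply Hg; lia.
Qed.

Section Solution.
Variables (n N : nat) (E A Ainv P : nat -> mat) (ts c : R) (sg : R -> nat) (x : R -> vec).
Hypothesis Hinv : forall i, (1 <= i <= N)%nat -> is_inverse n (A i) (Ainv i).
Hypothesis Hlyap : forall i, (1 <= i <= N)%nat -> lyapunov_matrix n (E i) (Ainv i) (P i).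
Hypothesis Hbounds : forall i, (1 <= i <= N)%nat -> lyapunov_bounds n (E i) (Ainv i) (P i) c.
Hypothesis Hsol : is_solution n N E A ts sg x.
Hypothesis Hjump : forall tstar i j xm xp, ts < tstar -> switch_at sg tstar i j ->
  left_lim n x tstar xm -> right_lim n x tstar xp -> quad n (P j) xp <= quad n (P i) xm.

Definition V (u : R) : R := quad n (P (sg u)) (x u).

Lemma mode_range t : ts <= t -> (1 <= sg t <= N)%nat.
Proof. apply (proj1 Hsol). Qed.

Lemma solution_right_continuous t : ts <= t -> right_lim n x t (x t).
Proof.
intros Ht. destruct Hsol as [_ [_ [H0 [Hode Hjmp]]]].
destruct (Rle_lt_or_eq_dec _ _ Ht) as [lt|<-]; auto.
destruct (classic (sig_cont sg t)) as [hc|hc].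
- destruct (Hode t lt hc) as [dx [Hd _]]. apply (has_deriv_continuous n x t dx Hd).
- apply (Hjmp t lt hc).
Qed.

Section Piece.
Variables (l r : R) (i : nat).
Hypothesis Hl : ts <= l.
Hypothesis Hlr : l < r.
Hypothesis Hconst : forall s, l < s < r -> sg s = i.

Lemma piece_mode_range : (1 <= i <= N)%nat.
Proof. rewrite <- (Hconst ((l + r) / 2)) by lra. apply mode_range; lra. Qed.

Lemma piece_sig_cont s : l < s < r -> sig_cont sg s.
Proof.
intros Hs. exists (Rmin (s - l) (r - s)); split; [apply Rmin_case; lra|].
intros s' Hs'. pose proof (Rmin_l (s - l) (r - s)); pose proof (Rmin_r (s - l) (r - s)).
apply Rabs_def2 in Hs'. rewrite !Hconst; auto; lra.
Qed.

Lemma piece_ode s : l < s < r ->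
  exists dx, has_deriv n x s dx /\ veq n (mv n (mm n (Ainv i) (E i)) dx) (x s).
Proof.
intros Hs. destruct Hsol as [_ [_ [_ [Hode _]]]].
destruct (Hode s ltac:(lra) (piece_sig_cont s Hs)) as [dx [Hd He]].
exists dx; split; auto. rewrite (Hconst s Hs) in He.
apply (descriptor_solve n (E i) (A i)); auto. apply Hinv, piece_mode_range.
Qed.

Lemma piece_inC s : l < s < r -> inC n (E i) (Ainv i) (x s).
Proof.
intros Hs. destruct (index_exists n (E i) (Ainv i)) as [k Hk].
exists k; split; auto. apply (solution_inIm_mpow n _ x l r piece_ode k s Hs).
Qed.

Lemma piece_deriv_inC s dx : l < s < r -> has_deriv n x s dx -> inC n (E i) (Ainv i) dx.
Proof.
intros Hs Hd. destruct (index_exists n (E i) (Ainv i)) as [k Hk].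
exists k; split; auto.
apply (has_deriv_inIm n _ x l r s dx (solution_inIm_mpow n _ x l r piece_ode k) Hs Hd).
Qed.

Lemma piece_decay s u : l < s -> s <= u -> u < r ->
  exp (c * u) * quad n (P i) (x u) <= exp (c * s) * quad n (P i) (x s).
Proof.
revert s u.
apply (nonincreasing_of_deriv_nonpos (fun u => exp (c * u) * quad n (P i) (x u)) l r).
intros t Ht.
destruct (piece_ode t Ht) as [dx [Hd Hm]].
destruct (Hbounds i piece_mode_range) as [_ [_ Hdiss]].
destruct (Hlyap i piece_mode_range) as [Hsym _].
eexists; split.
- apply derivable_pt_lim_mult;
    [apply derivable_pt_lim_exp_scal | apply (derivable_pt_lim_quad n (P i) x t dx Hd)].
- pose proof (Hdiss dx (piece_deriv_inC t dx Ht Hd)) as h.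
  rewrite (bil_veq n (P i) _ (x t) dx dx Hm (veq_refl n dx)) in h.
  rewrite (quad_veq n (P i) _ (x t) Hm) in h.
  rewrite (bil_sym n (P i) dx (x t)) by (intros; apply Hsym; auto).
  pose proof (exp_pos (c * t)). nra.
Qed.

Lemma piece_left_mode : sg l = i.
Proof.
destruct Hsol as [_ [[_ Hrc] _]].
destruct (Hrc l Hl) as [d [Hd Hs]].
assert (0 < Rmin d (r - l)) by (apply Rmin_case; lra).
pose proof (Rmin_l d (r - l)); pose proof (Rmin_r d (r - l)).
rewrite <- (Hs (l + Rmin d (r - l) / 2)) by lra. apply Hconst; lra.
Qed.

(* At r either sigma is continuous (so V is) or the jump hypothesis applies. *)
Lemma piece_right_jump : exists xm, left_lim n x r xm /\ V r <= quad n (P i) xm.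
Proof.
destruct Hsol as [_ [_ [_ [Hode Hjmp]]]].
destruct (classic (sig_cont sg r)) as [hc|hc].
- destruct (Hode r ltac:(lra) hc) as [dx [Hd _]].
  exists (x r); split; [apply (has_deriv_continuous n x r dx Hd)|].
  destruct hc as [d [Hd0 Hs]].
  assert (0 < Rmin d (r - l)) by (apply Rmin_case; lra).
  pose proof (Rmin_l d (r - l)); pose proof (Rmin_r d (r - l)).
  assert (e : sg r = i).
  { rewrite <- (Hs (r - Rmin d (r - l) / 2)); [apply Hconst; lra|].
    apply Rabs_def1; lra. }
  unfold V; rewrite e; lra.
- destruct (Hjmp r ltac:(lra) hc) as [[xm Hxm] Hxr].
  exists xm; split; auto.
  apply (Hjump r i (sg r) xm (x r)); auto; [lra|].
  split; [auto | split; [|reflexivity]].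
  exists (r - l); split; [lra|]. intros s Hs; apply Hconst; lra.
Qed.

Lemma piece_V_decay s u : l <= s -> s <= u -> u <= r ->
  exp (c * u) * V u <= exp (c * s) * V s.
Proof.
destruct piece_right_jump as [xm [Hxm HVr]].
assert (HVin : forall u, l < u < r -> V u = quad n (P i) (x u))
  by (intros; unfold V; rewrite Hconst; auto).
assert (HVl : V l = quad n (P i) (x l)) by (unfold V; rewrite piece_left_mode; auto).
assert (HG : forall s, l < s < r ->
  exp (c * r) * quad n (P i) xm <= exp (c * s) * quad n (P i) (x s) <= exp (c * l) * V l).
{ rewrite HVl. apply nonincreasing_between_limits; [exact piece_decay | |];
    apply (limit_mul (fun u => exp (c * u)) (fun u => quad n (P i) (x u)));
    try apply limit1_in_exp_scal; apply limit1_in_quad.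
  - apply right_lim_limit1_in, solution_right_continuous, Hl.
  - apply left_lim_limit1_in, Hxm. }
assert (HVr' : exp (c * r) * V r <= exp (c * r) * quad n (P i) xm)
  by (apply Rmult_le_compat_l; [apply Rlt_le, exp_pos | exact HVr]).
intros Hs Hsu Hu.
destruct (Req_dec s u) as [<-|ne]; [lra|].
destruct (Req_dec s l) as [->|nsl]; destruct (Req_dec u r) as [->|nur].
- pose proof (HG ((l + r) / 2) ltac:(lra)). lra.
- rewrite HVin by lra. apply HG; lra.
- rewrite (HVin s) by lra. pose proof (HG s ltac:(lra)). lra.
- rewrite !HVin by lra. apply piece_decay; lra.
Qed.

End Piece.

(* Chain [piece_V_decay] along a partition of [ts, t + 1] on whose open
   cells sigma is constant. *)
Lemma V_decay t0 t : ts <= t0 -> t0 <= t -> exp (c * t) * V t <= exp (c * t0) * V t0.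
Proof.
intros Ht0 Ht.
destruct Hsol as [_ [[Hpart _] _]].
destruct (Hpart (t + 1)) as [m [pts [H0 [Hm [Hinc Hcst]]]]]; [lra|].
assert (Hge : forall j, (j <= m)%nat -> ts <= pts j).
{ induction j as [|j IH]; intros hj; [lra|].
  pose proof (Hinc j ltac:(lia)). pose proof (IH ltac:(lia)). lra. }
assert (Hcells : forall j, (j <= m)%nat -> forall s u, ts <= s -> s <= u -> u <= pts j ->
          exp (c * u) * V u <= exp (c * s) * V s).
{ induction j as [|j IH]; intros hj s u Hs Hsu Hu.
  - assert (s = u) by lra. subst; lra.
  - pose proof (Hinc j ltac:(lia)). pose proof (Hge j ltac:(lia)).
    assert (Hconst : forall s, pts j < s < pts (S j) -> sg s = sg ((pts j + pts (S j)) / 2))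
      by (intros; apply (Hcst j); lra || lia).
    destruct (Rle_dec u (pts j)) as [hu|hu]; [apply IH; auto; lia|].
    destruct (Rle_dec (pts j) s) as [hs|hs].
    + apply (piece_V_decay (pts j) (pts (S j)) (sg ((pts j + pts (S j)) / 2))); auto; lra.
    + apply Rle_trans with (exp (c * pts j) * V (pts j)).
      * apply (piece_V_decay (pts j) (pts (S j)) (sg ((pts j + pts (S j)) / 2))); auto; lra.
      * apply IH; auto; lia || lra. }
apply (Hcells m); auto; lra.
Qed.

(* x(t) is the right limit of x on a cell where it lies in C, and C is the
   zero set of a linear map. *)
Lemma solution_inC t : ts <= t -> inC n (E (sg t)) (Ainv (sg t)) (x t).
Proof.
intros Ht.
destruct Hsol as [_ [[_ Hrc] _]].
destruct (Hrc t Ht) as [d [Hd Hs]].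
assert (Hconst : forall s, t < s < t + d -> sg s = sg t) by (intros; apply Hs; lra).
destruct (index_exists n (E (sg t)) (Ainv (sg t))) as [k Hk].
apply (inC_iff n _ _ k _ Hk).
destruct (inIm_kernel n (mpow n (mm n (Ainv (sg t)) (E (sg t))) k)) as [L HL].
apply HL. intros p hp. unfold vzero.
assert (Hlim : limit1_in (fun s => mv n L (x s) p) (fun s => t < s) (mv n L (x t) p) t)
  by (apply limit1_in_mv, right_lim_limit1_in, solution_right_continuous; auto).
assert (Hz : forall s, t < s -> Rabs (s - t) < d -> mv n L (x s) p = 0).
{ intros s Hts Hst. apply Rabs_def2 in Hst.
  apply HL; auto. apply (inC_iff n _ _ k _ Hk).
  apply (piece_inC t (t + d) (sg t)); auto; lra. }
apply Rle_antisym.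
- apply (limit1_in_le _ _ _ _ _ Hlim (points_right_near t)).
  exists d; split; auto. intros s Ds Hst. rewrite Hz; auto; lra.
- apply (limit1_in_ge _ _ _ _ _ Hlim (points_right_near t)).
  exists d; split; auto. intros s Ds Hst. rewrite Hz; auto; lra.
Qed.

End Solution.

Lemma norm_decay_of_V_decay n c t0 t x0 x1 V0 V1 : 0 < c ->
  c * sqnorm n x1 <= V1 -> V0 <= / c * sqnorm n x0 ->
  exp (c * t) * V1 <= exp (c * t0) * V0 ->
  vnorm n x1 <= / c * exp (- (c / 2) * (t - t0)) * vnorm n x0.
Proof.
intros Hc H1 H0 Hdec.
set (e := exp (- (c / 2) * (t - t0))).
assert (He : exp (c * t0) = e * e * exp (c * t)).
{ unfold e. rewrite <- !exp_plus. f_equal. field. }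
assert (Hexp := exp_pos (c * t)).
assert (Hic : 0 < / c) by (apply Rinv_0_lt_compat; auto).
assert (HV : V1 <= e * e * V0) by (rewrite He in Hdec; nra).
assert (Hs : sqnorm n x1 <= (/ c * e) * (/ c * e) * sqnorm n x0).
{ apply Rmult_le_reg_l with c; [auto|].
  assert (He0 : 0 < e) by apply exp_pos.
  replace (c * (/ c * e * (/ c * e) * sqnorm n x0)) with (e * e * (/ c * sqnorm n x0))
    by (field; lra).
  nra. }
unfold vnorm. fold (sqnorm n x1) (sqnorm n x0).
rewrite <- (sqrt_square (/ c * e)) by (apply Rmult_le_pos; [lra | apply Rlt_le, exp_pos]).
rewrite <- sqrt_mult_alt by nra.
apply sqrt_le_1_alt. lra.
Qed.

Theorem theorem1 (n N : nat) (E A Ainv P : nat -> mat)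
  (S : R -> (R -> nat) -> (R -> vec) -> Prop) :
  (forall i, (1 <= i <= N)%nat -> is_inverse n (A i) (Ainv i)) ->
  (forall i, (1 <= i <= N)%nat -> lyapunov_matrix n (E i) (Ainv i) (P i)) ->
  (forall ts sg x, S ts sg x -> is_solution n N E A ts sg x) ->
  (forall ts sg x, S ts sg x ->
     forall tstar i j xm xp, ts < tstar -> switch_at sg tstar i j ->
       left_lim n x tstar xm -> right_lim n x tstar xp ->
       quad n (P j) xp <= quad n (P i) xm) ->
  GUES n S.
Proof.
intros Hinv Hlyap HS HJ.
destruct (lyapunov_bounds_uniform n N E Ainv P Hlyap) as [c [Hc Hb]].
exists (/ c), (c / 2); split; [apply Rinv_0_lt_compat; lra | split; [lra|]].
intros ts sg x Hx t0 t Ht0 Ht.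
pose proof (HS ts sg x Hx) as Hsol.
assert (Hrange : forall u, ts <= u -> (1 <= sg u <= N)%nat)
  by (intros; eapply mode_range; eauto).
destruct (Hb (sg t) (Hrange t ltac:(lra))) as [Hlow _].
destruct (Hb (sg t0) (Hrange t0 Ht0)) as [_ [Hup _]].
eapply norm_decay_of_V_decay; [exact Hc | apply Hlow | apply Hup |].
- eapply solution_inC; eauto; lra.
- eapply V_decay; eauto.
Qed.
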